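(* Let $s\ge2$ and let $r>0$ satisfy $r\ge s+2$ and $\|u\|^2+\|w\|^2\le r$ for all $u\in\mathbb R^{s+1}$ with $u_1=1$, $\|(u_2,\dots,u_{s+1})\|_2\le1$ and all extreme points $w$ of $\{w\in\mathbb R^{2s}:w\ge0,B^Tw=d\}$. Define \[ Z:=\frac14\Big[\begin{pmatrix}2e_1\\ \mathbb 1_{2s}\end{pmatrix}\begin{pmatrix}2e_1\\ \mathbb 1_{2s}\end{pmatrix}^T+\sum_{i=1}^s\begin{pmatrix}\tfrac{2}{\sqrt s}e_{i+1}\\ f_{2i-1}-f_{2i}\end{pmatrix}\begin{pmatrix}\tfrac{2}{\sqrt s}e_{i+1}\\ f_{2i-1}-f_{2i}\end{pmatrix}^T\Big]\in\mathcal S^{3s+1}. \] Then $Z$ is an optimal solution of the problem \[ \max\ F\bullet Z_{21}\ \ \text{s.t.}\ \ \mathrm{diag}(EZE^T)=0,\ I\bullet Z\le r,\ J\bullet Z_{11}\ge0,\ Z_{11}e_1\in\widehat{\mathcal U}_2,\ Z_{22}\ge0,\ \text{each row of }Z_{21}\in\widehat{\mathcal U}_2,\ Z\succeq0,\ g_1g_1^T\bullet Z=1, \] and its objective value is $F\bullet Z_{21}=\tfrac12(\sqrt s+s)$.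
   Context: $k=s+1$, $m=2s$. $e_1,\dots,e_{s+1}$ standard basis of $\mathbb R^{s+1}$; $f_1,\dots,f_{2s}$ standard basis of $\mathbb R^{2s}$; $\epsilon_j$ standard basis of $\mathbb R^s$; $\mathbb 1_{2s}$ all-ones vector; $g_1=(e_1;0)\in\mathbb R^{3s+1}$. $d:=\epsilon_s$. $B\in\mathbb R^{2s\times s}$: rows $2i-1$ and $2i$ both equal $\epsilon_1^T$ for $i=1$ and both equal $-\epsilon_{i-1}^T+\epsilon_i^T$ for $i=2,\dots,s$. $F\in\mathbb R^{2s\times(s+1)}$: row $2i-1$ is $\tfrac12(e_1+e_{i+1})^T$, row $2i$ is $\tfrac12(e_1-e_{i+1})^T$. $E:=\begin{pmatrix}-de_1^T&B^T\end{pmatrix}$. $J:=\mathrm{Diag}(1,-1,\dots,-1)\in\mathcal S^{s+1}$. $\widehat{\mathcal U}_2:=\{u\in\mathbb R^{s+1}:\|(u_2,\dots,u_{s+1})\|_2\le u_1\}$. $Z$ is partitioned as $\begin{pmatrix}Z_{11}&Z_{21}^T\\Z_{21}&Z_{22}\end{pmatrix}$ with $Z_{11}\in\mathcal S^{s+1}$, $Z_{21}\in\mathbb R^{2s\times(s+1)}$, $Z_{22}\in\mathcal S^{2s}$. $A\bullet B:=\mathrm{trace}(A^TB)$; $\mathrm{diag}(\cdot)$ is the vector of diagonal entries; $Z_{22}\ge0$ is entrywise. *)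

From HB Require Import structures.
From mathcomp Require Import all_boot all_order all_algebra.
Unset Strict Implicit. Unset Printing Implicit Defensive.
Import Order.TTheory GRing.Theory Num.Theory.
Local Open Scope ring_scope.

Section Defs.
Variable R : rcfType.

Definition frob {m n : nat} (A B : 'M[R]_(m, n)) : R := \tr (A^T *m B).

(* standard basis column vector of R^n, index k (0-based) *)
Definition ev (n k : nat) : 'cV[R]_n := \col_(j < n) ((j == k :> nat)%:R).

Definition ones (n : nat) : 'cV[R]_n := const_mx 1.

Definition symmetric {n : nat} (A : 'M[R]_n) : Prop := A^T = A.

Definition psd {n : nat} (A : 'M[R]_n) : Prop :=
  forall x : 'cV[R]_n, 0 <= (x^T *m A *m x) 0 0.

Definition sqnorm {n : nat} (x : 'cV[R]_n) : R := \sum_(i < n) x i 0 ^+ 2.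

Definition tailnorm {s : nat} (u : 'cV[R]_s.+1) : R :=
  Num.sqrt (\sum_(i < s) u (lift ord0 i) 0 ^+ 2).

Definition U2hat {s : nat} (u : 'cV[R]_s.+1) : Prop := tailnorm u <= u ord0 0.

(* d := eps_s in R^s (0-based index s-1) *)
Definition dvec (s : nat) : 'cV[R]_s := ev s s.-1.

(* B in R^{2s x s}: rows 2i-1,2i (1-based) equal eps_1^T for i=1,
   and -eps_{i-1}^T + eps_i^T for i=2..s.  0-based: row j, i0 := j/2,
   entry k is [k == i0] - [i0 > 0 and k == i0 - 1]. *)
Definition Bmat (s : nat) : 'M[R]_(s.*2, s) :=
  \matrix_(j < s.*2, k < s)
    (((k == j./2 :> nat)%:R) - (((0 < j./2)%N && (k == (j./2).-1 :> nat))%:R)).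

(* F in R^{2s x (s+1)}: row 2i-1 = 1/2 (e_1 + e_{i+1})^T, row 2i = 1/2 (e_1 - e_{i+1})^T.
   0-based: row j, i0 := j/2, entry k = 1/2([k==0] + (-1)^(odd j) [k == i0+1]). *)
Definition Fmat (s : nat) : 'M[R]_(s.*2, s.+1) :=
  \matrix_(j < s.*2, k < s.+1)
    (2^-1 * (((k == 0 :> nat)%:R) + (-1) ^+ (odd j) * ((k == (j./2).+1 :> nat)%:R))).

Definition Emat (s : nat) : 'M[R]_(s, s.+1 + s.*2) :=
  row_mx (- (dvec s *m (ev s.+1 0)^T)) (Bmat s)^T.

Definition Jmat (s : nat) : 'M[R]_(s.+1) :=
  \matrix_(i, j) (if i == j then (if (i == 0 :> nat) then 1 else -1) else 0).

Definition g1 (s : nat) : 'cV[R]_(s.+1 + s.*2) := col_mx (ev s.+1 0) 0.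

Definition Z11 {s : nat} (Z : 'M[R]_(s.+1 + s.*2)) : 'M[R]_(s.+1) := ulsubmx Z.
Definition Z21 {s : nat} (Z : 'M[R]_(s.+1 + s.*2)) : 'M[R]_(s.*2, s.+1) := dlsubmx Z.
Definition Z22 {s : nat} (Z : 'M[R]_(s.+1 + s.*2)) : 'M[R]_(s.*2) := drsubmx Z.

Definition Wpoly (s : nat) (w : 'cV[R]_(s.*2)) : Prop :=
  (forall j, 0 <= w j 0) /\ (Bmat s)^T *m w = dvec s.

Definition extreme_point {n : nat} (P : 'cV[R]_n -> Prop) (w : 'cV[R]_n) : Prop :=
  P w /\ forall w1 w2 t, P w1 -> P w2 -> 0 < t -> t < 1 ->
    w = t *: w1 + (1 - t) *: w2 -> w1 = w2.

Definition objective {s : nat} (Z : 'M[R]_(s.+1 + s.*2)) : R := frob (Fmat s) (Z21 Z).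

Definition feasible (s : nat) (r : R) (Z : 'M[R]_(s.+1 + s.*2)) : Prop :=
  symmetric Z /\
  (forall i, (Emat s *m Z *m (Emat s)^T) i i = 0) /\
  frob 1%:M Z <= r /\
  0 <= frob (Jmat s) (Z11 Z) /\
  U2hat (Z11 Z *m ev s.+1 0) /\
  (forall i j, 0 <= Z22 Z i j) /\
  (forall i, U2hat (row i (Z21 Z))^T) /\
  psd Z /\
  frob (g1 s *m (g1 s)^T) Z = 1.

Definition optimal (s : nat) (r : R) (Z : 'M[R]_(s.+1 + s.*2)) : Prop :=
  feasible s r Z /\ forall Z', feasible s r Z' -> objective Z' <= objective Z.

Definition v0 (s : nat) : 'cV[R]_(s.+1 + s.*2) :=
  col_mx (2%:R *: ev s.+1 0) (ones s.*2).
Definition vi {s : nat} (i : 'I_s) : 'cV[R]_(s.+1 + s.*2) :=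
  col_mx ((2%:R / Num.sqrt s%:R) *: ev s.+1 i.+1)
         (ev s.*2 (i.*2) - ev s.*2 (i.*2).+1).
Definition Zstar (s : nat) : 'M[R]_(s.+1 + s.*2) :=
  4%:R^-1 *: (v0 s *m (v0 s)^T + \sum_(i < s) vi i *m (vi i)^T).

End Defs.

(* Every feasible [Z] satisfies [E Z = 0], because [Z] is positive semidefinite
   and [diag (E Z E^T) = 0].  As [B^T] takes differences of consecutive pair
   sums and [d = e_s], this says that in every column of [Z] the two entries in
   the rows [2i-1], [2i] of the lower block add up to the entry in the first
   row.  Hence the first column of [Z_21] sums to [s] and, with [Z_22 >= 0], the
   form of [Z] at [f_{2i-1} - f_{2i}] is at most [1].  Testing [Z] against
   [- sqrt s e_{i+1} + f_{2i-1} - f_{2i}] and summing over [i], with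
   [J . Z_11 >= 0] bounding the trace of the tail of [Z_11] by [1], bounds the
   remaining part of the objective by [sqrt s], so [F . Z_21 <= (s + sqrt s)/2].
   The matrix [Zstar] is a sum of rank-one terms in the kernel of [E] and
   attains this bound. *)

From Pilot Require Import Defs.
From HB Require Import structures.
From mathcomp Require Import all_boot all_order all_algebra.
From mathcomp Require Import ring lra zify.
Import Order.TTheory GRing.Theory Num.Theory.
Local Open Scope ring_scope.

Lemma sum_ord_indicator {R : pzSemiRingType} {n} (c0 : 'I_n) (f : 'I_n -> R) :
  \sum_(c < n) ((c == c0 :> nat)%:R * f c) = f c0.
Proof.
rewrite (bigD1 c0) //= eqxx mul1r big1 ?addr0 // => c /negPf.
by rewrite -(inj_eq val_inj) /= => ->; rewrite mul0r.
Qed.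

Lemma sum_nat_indicator {R : pzSemiRingType} n (a : nat) (f : nat -> R) :
  \sum_(c < n) ((c == a :> nat)%:R * f c) = (a < n)%:R * f a.
Proof.
case: (ltnP a n) => [lt_an|le_na].
  by rewrite (sum_ord_indicator (Ordinal lt_an) (fun c : 'I_n => f c)) mul1r.
rewrite mul0r big1 // => c _.
by rewrite (_ : (c == a :> nat) = false) ?mul0r //; apply/eqP => e; move: (ltn_ord c); lia.
Qed.

Lemma sum_nat_pairs {V : nmodType} n (g : nat -> V) :
  \sum_(j < n.*2) g j = \sum_(i < n) (g i.*2 + g i.*2.+1).
Proof.
rewrite -(big_mkord xpredT g) -(big_mkord xpredT (fun i => g i.*2 + g i.*2.+1)).
elim: n => [|n IH]; first by rewrite !big_geq.
by rewrite doubleS !big_nat_recr //= IH addrA.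
Qed.

Definition ord_even {n} (i : 'I_n) : 'I_n.*2 := Ordinal (etrans (ltn_double i n) (ltn_ord i)).
Definition ord_odd {n} (i : 'I_n) : 'I_n.*2 := Ordinal (etrans (ltn_Sdouble i n) (ltn_ord i)).

Lemma sum_ord_pairs {V : nmodType} n (F : 'I_n.*2 -> V) :
  \sum_(j < n.*2) F j = \sum_(i < n) (F (ord_even i) + F (ord_odd i)).
Proof.
pose g k := oapp F 0 (insub k).
have gE j : g (val j) = F j by rewrite /g valK.
rewrite (eq_bigr (g \o val)) => [|j _]; last by rewrite /= gE.
rewrite sum_nat_pairs; apply: eq_bigr => i _.
by rewrite -(gE (ord_even i)) -(gE (ord_odd i)).
Qed.

Section BilinearForm.
Context {R : comPzRingType} {n : nat}.
Implicit Types (Z : 'M[R]_n) (x y : 'cV[R]_n).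

Definition bform Z x y : R := (x^T *m Z *m y) 0 0.

Lemma bformDl Z x1 x2 y : bform Z (x1 + x2) y = bform Z x1 y + bform Z x2 y.
Proof. by rewrite /bform linearD /= !mulmxDl mxE. Qed.

Lemma bformDr Z x y1 y2 : bform Z x (y1 + y2) = bform Z x y1 + bform Z x y2.
Proof. by rewrite /bform !mulmxDr mxE. Qed.

Lemma bformZl Z a x y : bform Z (a *: x) y = a * bform Z x y.
Proof. by rewrite /bform linearZ /= -!scalemxAl mxE. Qed.

Lemma bformZr Z a x y : bform Z x (a *: y) = a * bform Z x y.
Proof. by rewrite /bform -!scalemxAr mxE. Qed.

Lemma bformC Z x y : Z^T = Z -> bform Z x y = bform Z y x.
Proof.
move=> ZT; rewrite /bform -[in LHS](trmxK (x^T *m Z *m y)) [LHS]mxE.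
by rewrite !trmx_mul trmxK ZT mulmxA.
Qed.

Lemma bform_delta Z p q : bform Z (delta_mx p 0) (delta_mx q 0) = Z p q.
Proof. by rewrite /bform trmx_delta -rowE -colE !mxE. Qed.

Lemma bform_deltal Z p x : bform Z (delta_mx p 0) x = (Z *m x) p 0.
Proof. by rewrite /bform trmx_delta -mulmxA -rowE mxE. Qed.

Lemma bform_row {m} (A : 'M[R]_(m, n)) Z k :
  bform Z (row k A)^T (row k A)^T = (A *m Z *m A^T) k k.
Proof.
rewrite /bform trmxK !mxE; apply: eq_bigr => j _; rewrite !mxE; congr (_ * _).
by apply: eq_bigr => l _; rewrite !mxE.
Qed.

Lemma bformMZ a Z x y : bform (a *: Z) x y = a * bform Z x y.
Proof. by rewrite /bform -scalemxAr -scalemxAl mxE. Qed.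

Lemma bformMD Z1 Z2 x y : bform (Z1 + Z2) x y = bform Z1 x y + bform Z2 x y.
Proof. by rewrite /bform mulmxDr mulmxDl mxE. Qed.

Lemma bformM_sum k (Z : 'I_k -> 'M[R]_n) x y :
  bform (\sum_(i < k) Z i) x y = \sum_(i < k) bform (Z i) x y.
Proof. by rewrite /bform mulmx_sumr mulmx_suml summxE. Qed.

Lemma bform_outer (v : 'cV[R]_n) x : bform (v *m v^T) x x = ((v^T *m x) 0 0) ^+ 2.
Proof.
rewrite /bform mulmxA -mulmxA -[x^T *m v](trmxK) trmx_mul trmxK.
by rewrite mxE big_ord1 mxE expr2.
Qed.

End BilinearForm.

Section Semidefinite.
Context {R : rcfType} {n : nat}.
Implicit Types (Z : 'M[R]_n) (x : 'cV[R]_n).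

(* Minimising the form along [x + t e_i] at [t = - Z_i x / (Z_ii + 1)]. *)
Lemma psd_bform_eq0 Z x : Defs.symmetric R Z -> psd R Z -> bform Z x x = 0 -> Z *m x = 0.
Proof.
move=> ZT Zpsd Zx0; apply/matrixP => i j; rewrite (ord1 j) [RHS]mxE -bform_deltal.
set y : 'cV[R]_n := delta_mx i 0; set b := bform Z y x; set c := bform Z y y.
have c_ge0 : 0 <= c by exact: Zpsd.
set u := (c + 1)^-1.
have u_gt0 : 0 < u by rewrite invr_gt0 ltr_wpDl.
have uc : u * c = 1 - u by rewrite -[c](addrK 1) mulrBr mulVf ?gt_eqF ?ltr_wpDl // mulr1.
have := Zpsd (x + (- b * u) *: y).
rewrite -/(bform _ _ _) !(bformDl, bformDr, bformZl, bformZr) Zx0 (bformC _ x y ZT) -/b -/c => H.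
have : b ^+ 2 * (u * (1 + u)) <= 0 by nra.
rewrite pmulr_lle0 ?mulr_gt0 ?ltr_wpDl // => b2_le0.
by apply/eqP; rewrite -sqrf_eq0 eq_le b2_le0 sqr_ge0.
Qed.

Lemma psd_mul_eq0 {m} (A : 'M[R]_(m, n)) Z : Defs.symmetric R Z -> psd R Z ->
  (forall k, (A *m Z *m A^T) k k = 0) -> A *m Z = 0.
Proof.
move=> ZT Zpsd AZA0; apply/row_matrixP => k; rewrite row_mul linear0.
have /psd_bform_eq0 Zrow0 := etrans (bform_row A Z k) (AZA0 k).
by rewrite -[row k A *m Z]trmxK trmx_mul ZT Zrow0 // trmx0.
Qed.

End Semidefinite.

Section ProblemData.
Context {R : rcfType}.

Definition cvnth {n} (w : 'cV[R]_n) (k : nat) : R := oapp (fun j => w j 0) 0 (insub k).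

Lemma cvnth_ord {n} (w : 'cV[R]_n) (j : 'I_n) : cvnth w j = w j 0.
Proof. by rewrite /cvnth valK. Qed.

Definition pairsum {n} (w : 'cV[R]_n) (i : nat) : R := cvnth w i.*2 + cvnth w i.*2.+1.

Lemma pairsum_ord {s} (w : 'cV[R]_s.*2) (i : 'I_s) :
  pairsum w i = w (ord_even i) 0 + w (ord_odd i) 0.
Proof. by rewrite /pairsum -!cvnth_ord. Qed.

Lemma BmatT_mulE s (w : 'cV[R]_s.*2) (k : 'I_s) :
  ((Bmat R s)^T *m w) k 0 = pairsum w k - (k.+1 < s)%:R * pairsum w k.+1.
Proof.
pose h n := (((k : nat) == n./2)%:R - (((0 < n./2)%N && (k == (n./2).-1 :> nat))%:R)) * cvnth w n.
rewrite mxE (eq_bigr (fun j : 'I_s.*2 => h j)) => [|j _]; last by rewrite /h cvnth_ord !mxE.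
have half_odd i : (i.*2.+1)./2 = i by lia.
have pred_eq i : ((0 < i)%N && (k == i.-1 :> nat)) = (i == k.+1) by case: i => [|i] //=; rewrite eqSS eq_sym.
rewrite sum_nat_pairs /h.
under eq_bigr => i _ do rewrite half_odd doubleK pred_eq eq_sym -mulrDr mulrBl.
by rewrite sumrB !(sum_nat_indicator _ _ (pairsum w)) ltn_ord mul1r.
Qed.

(* Downward induction from the last pair, the one on which [d] is supported. *)
Lemma BmatT_pairsum {s} {w : 'cV[R]_s.*2} {a : R} : (0 < s)%N ->
  (Bmat R s)^T *m w = a *: dvec R s -> forall i, (i < s)%N -> pairsum w i = a.
Proof.
move=> s_gt0 /matrixP Bw i lt_is; have [n ->] : exists n, i = (s.-1 - n)%N by exists (s.-1 - i)%N; lia.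
elim: n => [|n IHn].
  have lt_s1s : (s.-1 < s)%N by lia.
  have := Bw (Ordinal lt_s1s) 0.
  rewrite BmatT_mulE !mxE eqxx /= subn0 (_ : (s.-1.+1 < s)%N = false); last by lia.
  by rewrite mul0r subr0 mulr1.
have [le_sn|lt_ns] := leqP s.-1 n.
  by rewrite (_ : (s.-1 - n.+1 = s.-1 - n)%N) //; lia.
have lt_ks : (s.-1 - n.+1 < s)%N by lia.
have := Bw (Ordinal lt_ks) 0.
rewrite BmatT_mulE !mxE /= (_ : (s.-1 - n.+1).+1 = (s.-1 - n)%N); last by lia.
rewrite IHn (_ : (s.-1 - n < s)%N) ?mul1r; last by lia.
rewrite (_ : (s.-1 - n.+1 == s.-1)%N = false) ?mulr0; last by apply/eqP; lia.
by move/eqP; rewrite subr_eq0 => /eqP.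
Qed.

Lemma BmatT_mul_eq_dvec {s} (w : 'cV[R]_s.*2) (a : R) : (0 < s)%N ->
  (Bmat R s)^T *m w = a *: dvec R s <->
  forall i : 'I_s, w (ord_even i) 0 + w (ord_odd i) 0 = a.
Proof.
move=> s_gt0; split=> [Bw i | pairs].
  by rewrite -pairsum_ord (BmatT_pairsum s_gt0 Bw) ?ltn_ord.
apply/matrixP => k c; rewrite (ord1 c) BmatT_mulE !mxE pairsum_ord pairs.
have [lt_k1s | le_sk1] := ltnP k.+1 s.
  rewrite (pairsum_ord w (Ordinal lt_k1s)) pairs mul1r subrr.
  by rewrite (_ : (k == s.-1 :> nat) = false) ?mulr0 //; apply/eqP; lia.
by rewrite (_ : (k == s.-1 :> nat) = true) ?mul0r ?subr0 ?mulr1 //; apply/eqP; move: (ltn_ord k); lia.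
Qed.

Lemma ev_delta {n} (k : 'I_n) : ev R n k = delta_mx k 0.
Proof. by apply/matrixP => j c; rewrite (ord1 c) !mxE -(inj_eq val_inj) andbT. Qed.

Lemma g1_delta s : g1 R s = delta_mx (lshift s.*2 (ord0 : 'I_s.+1)) 0.
Proof.
rewrite /g1 (ev_delta (ord0 : 'I_s.+1)); apply/matrixP => a b; rewrite (ord1 b) !mxE.
by case: splitP => c cE; rewrite !mxE -?(inj_eq val_inj) /= cE.
Qed.

Lemma Emat_mulE s n (M : 'M[R]_(s.+1 + s.*2, n)) :
  Emat R s *m M = (Bmat R s)^T *m dsubmx M - dvec R s *m row 0 (usubmx M).
Proof.
rewrite -{1}(vsubmxK M) /Emat mul_row_col mulNmx -mulmxA addrC.
by rewrite (ev_delta (ord0 : 'I_s.+1)) trmx_delta -rowE.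
Qed.

Lemma Emat_mul_eq0 {s} (v : 'cV[R]_(s.+1 + s.*2)) : (0 < s)%N ->
  Emat R s *m v = 0 <->
  forall i : 'I_s, v (rshift _ (ord_even i)) 0 + v (rshift _ (ord_odd i)) 0 = v (lshift _ ord0) 0.
Proof.
move=> s_gt0; rewrite Emat_mulE.
have -> : dvec R s *m row 0 (usubmx v) = v (lshift _ ord0) 0 *: dvec R s.
  by apply/matrixP => k c; rewrite (ord1 c) !mxE big_ord1 !mxE mulrC.
split=> [/eqP | pairs].
  by rewrite subr_eq0 => /eqP /(BmatT_mul_eq_dvec _ _ s_gt0) pairs i; have := pairs i; rewrite !mxE.
apply/eqP; rewrite subr_eq0; apply/eqP/(BmatT_mul_eq_dvec _ _ s_gt0) => i.
by rewrite !mxE pairs.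
Qed.

Lemma Z11E s (M : 'M[R]_(s.+1 + s.*2)) a b : Z11 R M a b = M (lshift _ a) (lshift _ b).
Proof. by rewrite !mxE. Qed.

Lemma Z21E s (M : 'M[R]_(s.+1 + s.*2)) j b : Z21 R M j b = M (rshift _ j) (lshift _ b).
Proof. by rewrite !mxE. Qed.

Lemma Z22E s (M : 'M[R]_(s.+1 + s.*2)) j k : Z22 R M j k = M (rshift _ j) (rshift _ k).
Proof. by rewrite !mxE. Qed.

Lemma mul_ev0 {m n} (M : 'M[R]_(m, n.+1)) a : (M *m ev R n.+1 0) a 0 = M a ord0.
Proof. by rewrite (ev_delta ord0) -colE mxE. Qed.

Lemma tr_rowE {m n} (M : 'M[R]_(m, n)) j c : (row j M)^T c 0 = M j c.
Proof. by rewrite !mxE. Qed.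

Lemma frob_outer n (x : 'cV[R]_n) (Z : 'M[R]_n) : frob R (x *m x^T) Z = bform Z x x.
Proof. by rewrite /frob /bform trmx_mul trmxK -[in LHS]mulmxA mxtrace_mulC trace_mx11. Qed.

Lemma frob_Jmat s (A : 'M[R]_s.+1) :
  frob R (Jmat R s) A = A ord0 ord0 - \sum_(i < s) A (lift ord0 i) (lift ord0 i).
Proof.
rewrite /frob /mxtrace (eq_bigr (fun c : 'I_s.+1 => (if c == 0 :> nat then 1 else -1) * A c c)).
  rewrite big_ord_recl /= mul1r -sumrN.
  by congr (_ + _); apply: eq_bigr => i _; rewrite mulN1r.
move=> c _; rewrite !mxE (bigD1 c) //= !mxE eqxx big1 ?addr0 // => e /negPf ne.
by rewrite !mxE ne mul0r.
Qed.

Lemma frob_Fmat s (W : 'M[R]_(s.*2, s.+1)) :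
  frob R (Fmat R s) W = 2^-1 * \sum_(j < s.*2) W j ord0
    + 2^-1 * \sum_(i < s) (W (ord_even i) (lift ord0 i) - W (ord_odd i) (lift ord0 i)).
Proof.
have Frow (j : 'I_s.*2) (l : 'I_s.+1) : l = (j./2).+1 :> nat ->
    \sum_(c < s.+1) Fmat R s j c * W j c = 2^-1 * (W j ord0 + (-1) ^+ odd j * W j l).
  move=> lE; rewrite (eq_bigr (fun c : 'I_s.+1 => (c == 0 :> nat)%:R * (2^-1 * W j c)
      + (c == l :> nat)%:R * (2^-1 * (-1) ^+ odd j * W j c))) => [|c _]; last first.
    by rewrite mxE -lE; ring.
  by rewrite big_split /= (sum_ord_indicator ord0) (sum_ord_indicator l); ring.
rewrite /frob /mxtrace (eq_bigr (fun c : 'I_s.+1 => \sum_(j < s.*2) Fmat R s j c * W j c)); last first.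
  by move=> c _; rewrite mxE; apply: eq_bigr => j _; rewrite mxE.
rewrite exchange_big sum_ord_pairs [X in _ * X + _]sum_ord_pairs !mulr_sumr -big_split.
apply: eq_bigr => i _.
have half_even : lift ord0 i = ((ord_even i)./2).+1 :> nat by rewrite lift0 /= doubleK.
have half_odd : lift ord0 i = ((ord_odd i)./2).+1 :> nat by rewrite lift0 /=; lia.
by rewrite (Frow _ _ half_even) (Frow _ _ half_odd) /= odd_double expr0 expr1; ring.
Qed.

End ProblemData.

Section UpperBound.
Variables (R : rcfType) (s : nat) (Z : 'M[R]_(s.+1 + s.*2)).
Hypotheses (s_gt0 : (0 < s)%N) (ZT : Defs.symmetric R Z) (Z_psd : psd R Z).
Hypothesis EZE0 : forall i, (Emat R s *m Z *m (Emat R s)^T) i i = 0.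
Hypothesis Z11_J : 0 <= frob R (Jmat R s) (Z11 R Z).
Hypothesis Z22_ge0 : forall i j, 0 <= Z22 R Z i j.
Hypothesis Z_g1 : frob R (g1 R s *m (g1 R s)^T) Z = 1.

Local Notation top := (@lshift s.+1 s.*2).
Local Notation bot := (@rshift s.+1 s.*2).

Lemma Z_entryC p q : Z p q = Z q p.
Proof. by rewrite -[in LHS]ZT mxE. Qed.

Lemma Z_top00 : Z (top ord0) (top ord0) = 1.
Proof. by move: Z_g1; rewrite g1_delta frob_outer bform_delta. Qed.

Lemma Z_pairsum m (i : 'I_s) :
  Z (bot (ord_even i)) m + Z (bot (ord_odd i)) m = Z (top ord0) m.
Proof.
have Ecol : Emat R s *m col m Z = 0.
  by rewrite colE mulmxA (psd_mul_eq0 _ _ ZT Z_psd EZE0) mul0mx.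
by have /(Emat_mul_eq0 _ s_gt0)/(_ i) := Ecol; rewrite !mxE.
Qed.

Lemma sum_Z_first_col : \sum_(j < s.*2) Z (bot j) (top ord0) = s%:R.
Proof.
rewrite sum_ord_pairs (eq_bigr (fun _ => 1)) => [|i _]; last by rewrite Z_pairsum Z_top00.
by rewrite sumr_const card_ord.
Qed.

Lemma sum_Z_tail_diag_le1 : \sum_(i < s) Z (top (lift ord0 i)) (top (lift ord0 i)) <= 1.
Proof.
move: Z11_J; rewrite frob_Jmat subr_ge0 Z11E Z_top00.
by under eq_bigr do rewrite Z11E.
Qed.

(* The pair identities of the columns [b0], [b1] and [1] give
   [Z b0 b0 + Z b1 b1 = 1 - 2 Z b0 b1]. *)
Lemma Z_pair_diff_le1 (i : 'I_s) (b0 := bot (ord_even i)) (b1 := bot (ord_odd i)) :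
  Z b0 b0 + Z b1 b1 - 2 * Z b0 b1 <= 1.
Proof.
have := Z22_ge0 (ord_even i) (ord_odd i); rewrite Z22E -/b0 -/b1 => Zb01_ge0.
have := Z_pairsum b0 i; have := Z_pairsum b1 i; have := Z_pairsum (top ord0) i.
rewrite Z_top00 -/b0 -/b1 (Z_entryC (top ord0) b0) (Z_entryC (top ord0) b1) (Z_entryC b1 b0).
lra.
Qed.

(* Positivity of [Z] along [- t e_{i+1} + f_{2i-1} - f_{2i}]. *)
Lemma Z_pair_bound t (i : 'I_s)
    (a := top (lift ord0 i)) (b0 := bot (ord_even i)) (b1 := bot (ord_odd i)) :
  2 * t * (Z b0 a - Z b1 a) <= t ^+ 2 * Z a a + 1.
Proof.
have := Z_psd ((- t) *: delta_mx a 0 + delta_mx b0 0 - delta_mx b1 0).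
rewrite -/(bform _ _ _) -scaleN1r !(bformDl, bformDr, bformZl, bformZr, bform_delta).
have /= := Z_pair_diff_le1 i.
rewrite -/b0 -/b1 (Z_entryC a b0) (Z_entryC a b1) (Z_entryC b1 b0).
nra.
Qed.

Lemma objective_le : objective R Z <= 2^-1 * (Num.sqrt s%:R + s%:R).
Proof.
have t_gt0 : 0 < Num.sqrt (s%:R : R) by rewrite sqrtr_gt0 ltr0n.
have t2 : Num.sqrt (s%:R : R) ^+ 2 = s%:R by rewrite sqr_sqrtr ?ler0n.
set t := Num.sqrt _ in t_gt0 t2 *.
rewrite /objective frob_Fmat.
under eq_bigr do rewrite Z21E.
under [X in _ + _ * X]eq_bigr do rewrite !Z21E.
rewrite sum_Z_first_col.
set S := \sum_(i < s) _.
have := sum_Z_tail_diag_le1; set A := \sum_(i < s) _ => A_le1.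
have : 2 * t * S <= t ^+ 2 * A + s%:R.
  rewrite /S mulr_sumr; apply: le_trans (ler_sum _ (fun i _ => Z_pair_bound t i)) _.
  by rewrite big_split /= -mulr_sumr sumr_const card_ord.
nra.
Qed.

End UpperBound.

Lemma feasible_objective_le (R : rcfType) s r (Z : 'M[R]_(s.+1 + s.*2)) : (0 < s)%N ->
  feasible R s r Z -> objective R Z <= 2^-1 * (Num.sqrt s%:R + s%:R).
Proof. by move=> s_gt0 [ZT [EZE0 [_ [Z11_J [_ [Z22_ge0 [_ [Z_psd Z_g1]]]]]]]]; exact: objective_le. Qed.

Section Solution.
Context {R : rcfType}.
Variable s : nat.

Local Notation top := (@lshift s.+1 s.*2).
Local Notation bot := (@rshift s.+1 s.*2).
Local Notation t := (Num.sqrt (s%:R : R)).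

Lemma Zstar_entry p q : Zstar R s p q =
  4%:R^-1 * (v0 R s p 0 * v0 R s q 0 + \sum_(i < s) vi R i p 0 * vi R i q 0).
Proof.
rewrite /Zstar mxE mxE summxE; congr (_ * (_ + _)).
  by rewrite [(v0 R s *m _) _ _]mxE big_ord1 [(v0 R s)^T _ _]mxE.
by apply: eq_bigr => i _; rewrite [(vi R i *m _) _ _]mxE big_ord1 [(vi R i)^T _ _]mxE.
Qed.

Lemma v0_top a : v0 R s (top a) 0 = 2%:R * (a == 0 :> nat)%:R.
Proof. by rewrite /v0 col_mxEu !mxE. Qed.

Lemma v0_bot j : v0 R s (bot j) 0 = 1.
Proof. by rewrite /v0 col_mxEd !mxE. Qed.

Lemma vi_top (i : 'I_s) a : vi R i (top a) 0 = (2%:R / t) * (a == i.+1 :> nat)%:R.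
Proof. by rewrite /vi col_mxEu !mxE. Qed.

Lemma vi_bot (i : 'I_s) j : vi R i (bot j) 0 = (i == j./2 :> nat)%:R * (-1) ^+ odd j.
Proof.
rewrite /vi col_mxEd !mxE; have := odd_double_half j.
case: (odd j) => /= jE; rewrite ?expr0 ?expr1 ?mulr1 ?mulrN1.
  rewrite (_ : (j == i.*2 :> nat) = false) ?sub0r; last by apply/eqP; lia.
  by rewrite (_ : (j == i.*2.+1 :> nat) = (i == j./2 :> nat)) //; apply/eqP/eqP; lia.
rewrite (_ : (j == i.*2.+1 :> nat) = false) ?subr0; last by apply/eqP; lia.
by rewrite (_ : (j == i.*2 :> nat) = (i == j./2 :> nat)) //; apply/eqP/eqP; lia.
Qed.

Lemma Zstar_bot_bot j j' : Zstar R s (bot j) (bot j') =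
  4%:R^-1 * (1 + (j./2 == j'./2 :> nat)%:R * (-1) ^+ (odd j (+) odd j')).
Proof.
rewrite Zstar_entry !v0_bot mul1r signr_addb; congr (_ * (_ + _)).
under eq_bigr => i _ do rewrite !vi_bot mulrACA -mulrA.
rewrite (sum_nat_indicator _ _ (fun i => (i == j'./2 :> nat)%:R * _)).
rewrite (_ : (j./2 < s)%N); last by move: (ltn_ord j); lia.
by rewrite mul1r.
Qed.

Lemma Zstar_bot_top j a : Zstar R s (bot j) (top a) =
  4%:R^-1 * (2%:R * (a == 0 :> nat)%:R
             + (-1) ^+ odd j * (2%:R / t) * (a == (j./2).+1 :> nat)%:R).
Proof.
rewrite Zstar_entry v0_bot v0_top mul1r; congr (_ * (_ + _)).
pose f i := (-1) ^+ odd j * (2%:R / t) * (a == i.+1 :> nat)%:R.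
rewrite (eq_bigr (fun i : 'I_s => (i == j./2 :> nat)%:R * f i)) => [|i _]; last first.
  by rewrite vi_bot vi_top /f; ring.
by rewrite sum_nat_indicator (_ : (j./2 < s)%N) ?mul1r //; move: (ltn_ord j); lia.
Qed.

Lemma Zstar_top_col0 a : Zstar R s (top a) (top ord0) = (a == 0 :> nat)%:R.
Proof.
rewrite Zstar_entry !v0_top big1; last by move=> i _; rewrite !vi_top /= !mulr0.
by rewrite addr0 /= mulr1; case: (a == 0 :> nat) => /=; field.
Qed.

Lemma Zstar_top_tail (c : 'I_s) : Zstar R s (top (lift ord0 c)) (top (lift ord0 c)) = s%:R^-1.
Proof.
have s_gt0 : (0 < s)%N by move: (ltn_ord c); lia.
rewrite Zstar_entry !v0_top lift0 /= mulr0 mul0r add0r.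
rewrite (eq_bigr (fun i : 'I_s => (i == c :> nat)%:R * (2%:R / t) ^+ 2)) => [|i _]; last first.
  rewrite !vi_top lift0 eqSS eq_sym.
  by case: (i == c :> nat); rewrite ?mulr0 ?mul0r ?mulr1 ?mul1r // expr2.
rewrite (sum_nat_indicator _ _ (fun _ => (2%:R / t) ^+ 2)) ltn_ord mul1r expr_div_n sqr_sqrtr ?ler0n //.
by field; rewrite pnatr_eq0 -lt0n.
Qed.

Lemma Zstar_sym : Defs.symmetric R (Zstar R s).
Proof.
rewrite /Defs.symmetric /Zstar linearZ /= linearD /= linear_sum /= trmx_mul trmxK.
by under eq_bigr do rewrite trmx_mul trmxK.
Qed.

Lemma Zstar_psd : psd R (Zstar R s).
Proof.
move=> x; rewrite -/(bform _ x x) /Zstar bformMZ bformMD bformM_sum bform_outer.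
rewrite mulr_ge0 ?invr_ge0 ?ler0n ?addr_ge0 ?sqr_ge0 //.
by apply: sumr_ge0 => i _; rewrite bform_outer sqr_ge0.
Qed.

Lemma Emat_mul_Zstar : (0 < s)%N -> Emat R s *m Zstar R s = 0.
Proof.
move=> s_gt0.
have Ev0 : Emat R s *m v0 R s = 0.
  by apply/(Emat_mul_eq0 _ s_gt0) => i; rewrite !v0_bot v0_top /= mulr1.
have Evi i : Emat R s *m vi R i = 0.
  apply/(Emat_mul_eq0 _ s_gt0) => k; rewrite !vi_bot vi_top /= odd_double doubleK.
  by rewrite uphalf_double expr0 expr1 mulr0 mulrN1 mulr1 subrr.
rewrite /Zstar -scalemxAr mulmxDr mulmx_sumr mulmxA Ev0 mul0mx add0r big1 ?scaler0 //.
by move=> i _; rewrite mulmxA Evi mul0mx.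
Qed.

Lemma Zstar_top00 : Zstar R s (top ord0) (top ord0) = 1.
Proof. by rewrite Zstar_top_col0. Qed.

Lemma Zstar_bot_diag j : Zstar R s (bot j) (bot j) = 2^-1.
Proof. by rewrite Zstar_bot_bot eqxx addbb expr0 mulr1 /=; field. Qed.

Lemma Zstar_g1 : frob R (g1 R s *m (g1 R s)^T) (Zstar R s) = 1.
Proof. by rewrite frob_outer g1_delta bform_delta Zstar_top00. Qed.

Lemma Zstar_trace : (0 < s)%N -> frob R 1%:M (Zstar R s) = (s + 2)%:R.
Proof.
move=> s_gt0; rewrite /frob trmx1 mul1mx -[Zstar R s]submxK mxtrace_block.
rewrite -/(Z11 R _) -/(Z22 R _) /mxtrace big_ord_recl Z11E Zstar_top00.
rewrite (eq_bigr (fun _ => s%:R^-1)) => [|c _]; last by rewrite Z11E Zstar_top_tail.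
rewrite [X in _ + X](eq_bigr (fun _ => 2^-1)) => [|j _]; last by rewrite Z22E Zstar_bot_diag.
rewrite !sumr_const !card_ord -[_ *+ s]mulr_natr -[_ *+ s.*2]mulr_natr -muln2 natrM natrD.
by field; rewrite pnatr_eq0 -lt0n.
Qed.

Lemma Zstar_J : (0 < s)%N -> 0 <= frob R (Jmat R s) (Z11 R (Zstar R s)).
Proof.
move=> s_gt0; rewrite frob_Jmat Z11E Zstar_top00.
under eq_bigr do rewrite Z11E Zstar_top_tail.
by rewrite sumr_const card_ord -[_ *+ s]mulr_natr mulVf ?pnatr_eq0 -?lt0n // subrr.
Qed.

Lemma Zstar_first_col_U2 : U2hat R (Z11 R (Zstar R s) *m ev R s.+1 0).
Proof.
rewrite /U2hat /tailnorm mul_ev0 Z11E Zstar_top00 big1 ?sqrtr0 // => i _.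
by rewrite mul_ev0 Z11E Zstar_top_col0 /= expr2 mul0r.
Qed.

Lemma Zstar_Z22_ge0 i j : 0 <= Z22 R (Zstar R s) i j.
Proof.
rewrite Z22E Zstar_bot_bot mulr_ge0 ?invr_ge0 ?ler0n //.
by case: (_ == _); case: (_ (+) _); rewrite /= ?expr0 ?expr1; lra.
Qed.

Lemma Zstar_Z21_rows : (0 < s)%N -> forall j, U2hat R (row j (Z21 R (Zstar R s)))^T.
Proof.
move=> s_gt0 j.
have t_gt0 : 0 < t by rewrite sqrtr_gt0 ltr0n.
have t2 : t ^+ 2 = s%:R by rewrite sqr_sqrtr ?ler0n.
have s_ge1 : (1 : R) <= s%:R by rewrite ler1n.
have t_ge1 : 1 <= t by nra.
rewrite /U2hat /tailnorm tr_rowE Z21E Zstar_bot_top.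
rewrite (eq_bigr (fun i : 'I_s => (i == j./2 :> nat)%:R * (4%:R^-1 * (2%:R / t)) ^+ 2)); last first.
  move=> i _; rewrite tr_rowE Z21E Zstar_bot_top lift0 eqSS.
  by case: (i == j./2 :> nat); case: (odd j) => /=; ring.
rewrite (sum_nat_indicator _ _ (fun _ => (4%:R^-1 * (2%:R / t)) ^+ 2)) /=.
rewrite (_ : (j./2 < s)%N) ?mul1r ?sqrtr_sqr; last by move: (ltn_ord j); lia.
rewrite mulr0 addr0 mulr1 ger0_norm; last by rewrite mulr_ge0 ?invr_ge0 ?divr_ge0 ?ler0n // ltW.
by rewrite ler_pM2l ?invr_gt0 ?ltr0n // ler_pdivrMr //; lra.
Qed.

Lemma Zstar_objective : (0 < s)%N ->
  objective R (Zstar R s) = 2^-1 * (Num.sqrt s%:R + s%:R).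
Proof.
move=> s_gt0.
have t_gt0 : 0 < t by rewrite sqrtr_gt0 ltr0n.
have t2 : t ^+ 2 = s%:R by rewrite sqr_sqrtr ?ler0n.
rewrite /objective frob_Fmat.
rewrite (eq_bigr (fun _ => 2^-1)) => [|j _]; last first.
  by rewrite Z21E Zstar_bot_top /= mulr0 addr0; field.
rewrite [X in _ + _ * X](eq_bigr (fun _ => t^-1)) => [|i _]; last first.
  rewrite !Z21E !Zstar_bot_top lift0 /= odd_double doubleK uphalf_double eqxx /=.
  by field; rewrite gt_eqF.
rewrite !sumr_const !card_ord -[_ *+ s]mulr_natr -[_ *+ s.*2]mulr_natr -muln2 natrM.
set u := Num.sqrt _ in t_gt0 t2 *; rewrite -t2.
by field; rewrite gt_eqF.
Qed.

End Solution.

Theorem proposition7 (R : rcfType) (s : nat) (r : R) :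
  (2 <= s)%N ->
  0 < r ->
  (s + 2)%:R <= r ->
  (forall (u : 'cV[R]_s.+1) (w : 'cV[R]_(s.*2)),
      u ord0 0 = 1 -> tailnorm R u <= 1 ->
      extreme_point R (Wpoly R s) w ->
      sqnorm R u + sqnorm R w <= r) ->
  optimal R s r (Zstar R s) /\ objective R (Zstar R s) = 2^-1 * (Num.sqrt s%:R + s%:R).
Proof.
(* [r >= s + 2] already makes room for [I . *)
move=> s_ge2 _ s2_le_r _; have s_gt0 : (0 < s)%N by apply: leq_trans s_ge2.
have Zfeas : feasible R s r (Zstar R s).
  split; first exact: Zstar_sym.
  split; first by move=> i; rewrite Emat_mul_Zstar // mul0mx mxE.
  split; first by rewrite Zstar_trace.
  split; first exact: Zstar_J.
  split; first exact: Zstar_first_col_U2.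
  split; first exact: Zstar_Z22_ge0.
  split; first exact: Zstar_Z21_rows.
  by split; [exact: Zstar_psd | exact: Zstar_g1].
split; last exact: Zstar_objective.
split=> // Z Zf; rewrite Zstar_objective //; exact: feasible_objective_le Zf.
Qed.
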